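(* Consider the status-update system described in the context. For every slot $t$ (whenever the conditioning events involved have positive probability), the belief $\beta(t+1)=(\beta_0(t+1),\dots,\beta_B(t+1))^{\mathrm T}$ about the battery level is obtained from $\beta(t)$, the action $a(t)$ and the new observation $o(t+1)=(r(t+1),\Delta(t+1),\tilde b(t+1))$ as \[ \beta(t+1)=\begin{cases} \boldsymbol{\Lambda}\beta(t), & a(t)=0,\\ \rho^{0}, & a(t)=1,\ \Delta(t+1)>1,\\ \rho^{j}, & a(t)=1,\ \Delta(t+1)=1,\ \tilde b(t+1)=j,\quad j\in\{1,\dots,B\}, \end{cases} \] where $\boldsymbol{\Lambda}\in[0,1]^{(B+1)\times(B+1)}$ is the left stochastic matrix (rows and columns indexed by $0,\dots,B$) with entries $\Lambda_{j,j}=1-\lambda$ and $\Lambda_{j+1,j}=\lambda$ for $j=0,\dots,B-1$, $\Lambda_{B,B}=1$, and all other entries $0$; and the vectors $\rho^j\in[0,1]^{B+1}$ are $\rho^0=\rho^1=(1-\lambda,\lambda,0,\dots,0)^{\mathrm T}$ and, for $j=1,\dots,B$, $\rho^j$ has entry $1-\lambda$ at index $j-1$, entry $\lambda$ at index $j$, and zeros elsewhere (indices $0,\dots,B$).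
   Context: Time is slotted, $t=1,2,\dots$. A sensor has a battery of capacity $B\in\{1,2,\dots\}$ units, with level $b(t)\in\{0,\dots,B\}$ at the beginning of slot $t$. Energy arrivals $e(t)\in\{0,1\}$ are i.i.d. Bernoulli with $\Pr(e(t)=1)=\lambda$; requests $r(t)\in\{0,1\}$ are i.i.d. Bernoulli with $\Pr(r(t)=1)=p$; the two processes are independent of each other and of everything else. At each slot an edge node chooses an action $a(t)\in\{0,1\}$ (command the sensor to send an update or not); the sensor sends an update iff $d(t)=a(t)\mathbf 1_{\{b(t)\ge 1\}}=1$, and $b(t+1)=\min\{b(t)+e(t)-d(t),B\}$. The age of information $\Delta(t)\in\{1,\dots,\Delta^{\max}\}$ (with $\Delta^{\max}\ge 2$ an integer) evolves as $\Delta(t+1)=1$ if $d(t)=1$ and $\Delta(t+1)=\min\{\Delta(t)+1,\Delta^{\max}\}$ if $d(t)=0$. Each received update carries the sensor's battery level at the slot it was sent, so the edge node's partial battery knowledge $\tilde b(t)\in\{1,\dots,B\}$ evolves as $\tilde b(t+1)=b(t)$ if $d(t)=1$ and $\tilde b(t+1)=\tilde b(t)$ if $d(t)=0$. The edge node observes $o(t)=(r(t),\Delta(t),\tilde b(t))$ but not $b(t)$. The complete information state $\phi^{c}(t)$ consists of an initial probability distribution over the states together with $o(1),\dots,o(t),a(1),\dots,a(t-1)$; the action $a(t)$ is a (possibly randomized, with randomization independent of everything else) function of $\phi^c(t)$. The belief is $\beta_j(t)=\Pr(b(t)=j\mid \phi^{c}(t))$, $j=0,\dots,B$. *)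

(* Explicit discrete construction of the law of the
   status-update process over a finite horizon N (slots 1..N). *)
From mathcomp Require Import all_boot all_order all_algebra.
Set Implicit Arguments.
Unset Strict Implicit.
Unset Printing Implicit Defensive.
Import Order.TTheory GRing.Theory Num.Theory.
Local Open Scope ring_scope.

(* observation o = (r, Delta, btilde) *)
Definition obs := (bool * nat * nat)%type.
(* hidden+observable state (b, Delta, btilde) *)
Definition sstate := (nat * nat * nat)%type.

Section Model.
Variable R : realFieldType.
Variables (B Dmax : nat) (lam p : R).

(* Finite type encoding the initial state: (b, Delta-1, btilde-1),
   i.e. b in {0..B}, Delta in {1..Dmax}, btilde in {1..B}. *)
Definition S0 := ('I_B.+1 * 'I_Dmax * 'I_B)%type.
Definition decode (x : S0) : sstate :=
  (nat_of_ord x.1.1, (nat_of_ord x.1.2).+1, (nat_of_ord x.2).+1).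

Definition bern (q : R) (x : bool) : R := if x then q else 1 - q.

(* one-slot dynamics: action a(t), energy arrival e(t) *)
Definition step (s : sstate) (a e : bool) : sstate :=
  let: (b, D, bt) := s in
  let d := a && (0 < b)%N in
  (minn (b + e - d) B, (if d then 1 else minn D.+1 Dmax)%N, if d then b else bt).

(* state at (0-based) slot k, i.e. at slot t = k+1 *)
Definition state (x0 : sstate) (acts ens : seq bool) (k : nat) : sstate :=
  foldl (fun s i => step s (nth false acts i) (nth false ens i)) x0 (iota 0 k).

(* Sample space for horizon N: initial state, energy arrivals e(1..N),
   requests r(1..N), actions a(1..N). *)
Definition Omega (N : nat) :=
  (S0 * N.-tuple bool * N.-tuple bool * N.-tuple bool)%type.

Definition om_x {N} (w : Omega N) := w.1.1.1.
Definition om_e {N} (w : Omega N) : seq bool := w.1.1.2.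
Definition om_r {N} (w : Omega N) : seq bool := w.1.2.
Definition om_a {N} (w : Omega N) : seq bool := w.2.

Definition om_state {N} (w : Omega N) (k : nat) : sstate :=
  state (decode (om_x w)) (om_a w) (om_e w) k.

(* observation o(k+1) *)
Definition om_obs {N} (w : Omega N) (k : nat) : obs :=
  (nth false (om_r w) k, (om_state w k).1.2, (om_state w k).2).

Definition obs_hist {N} (w : Omega N) (t : nat) : seq obs :=
  [seq om_obs w i | i <- iota 0 t].

Variable pi : S0 -> R.
Variable mu : seq obs -> seq bool -> R.     (* randomized policy: Pr(a(t)=1 | o(1..t), a(1..t-1)) *)

Definition weight {N} (w : Omega N) : R :=
  pi (om_x w) *
  \prod_(i < N) (bern lam (nth false (om_e w) i) * bern p (nth false (om_r w) i) *
                 bern (mu (obs_hist w i.+1) (take i (om_a w))) (nth false (om_a w) i)).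

(* Pr( o(1..t) = hobs, a(1..t-1) = ha, b(t) satisfies P ) *)
Definition joint (N t : nat) (hobs : seq obs) (ha : seq bool) (P : pred nat) : R :=
  \sum_(w : Omega N)
     if [&& obs_hist w t == hobs, take t.-1 (om_a w) == ha & P (om_state w t.-1).1.1]
     then weight w else 0.

Definition belief (N t : nat) (hobs : seq obs) (ha : seq bool) : 'cV[R]_B.+1 :=
  \col_(j < B.+1) (joint N t hobs ha (pred1 (nat_of_ord j)) / joint N t hobs ha predT).

Definition Lambda : 'M[R]_B.+1 :=
  \matrix_(i < B.+1, j < B.+1)
    (if i == j then (if nat_of_ord j == B then 1 else 1 - lam)
     else if nat_of_ord i == (nat_of_ord j).+1 then lam else 0).

Definition rho (j : nat) : 'cV[R]_B.+1 :=
  let k := maxn j 1 in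
  \col_(i < B.+1) (if nat_of_ord i == k.-1 then 1 - lam
                   else if nat_of_ord i == k then lam else 0).

End Model.

From mathcomp Require Import all_boot all_order all_algebra.
From mathcomp Require Import ring lra.
Set Implicit Arguments.
Unset Strict Implicit.
Unset Printing Implicit Defensive.
Import Order.TTheory GRing.Theory Num.Theory.
Local Open Scope ring_scope.

(* Every probability in the statement is a finite sum over the outcomes
   (initial state, e, r, a) weighted by the product of their Bernoulli
   weights.  Flipping a single bit of an outcome is an involution, and pairing
   each outcome with its flip averages that bit out; hence the slots after
   t + 1 only contribute a constant factor.  In slot t the energy arrival e(t)
   and the action a(t) depend on the past only through the observed history,
   so averaging them out turns the joint mass of (history, o(t+1), b(t+1) = i)
   into a linear image of the unnormalised belief at t: the matrix Lambda when
   a(t) = 0, and, when a(t) = 1, the battery level the node now knows (0 if the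
   age did not reset, b~(t+1) if it did) followed by one Bernoulli(lam) arrival.
   Normalising gives the three cases. *)

Lemma stateS B Dmax x0 acts ens k :
  state B Dmax x0 acts ens k.+1 =
  step B Dmax (state B Dmax x0 acts ens k) (nth false acts k) (nth false ens k).
Proof. by rewrite /state -addn1 iotaD cats1 foldl_rcons. Qed.

Lemma eq_state B Dmax x0 acts ens acts' ens' k :
  (forall i, (i < k)%N ->
     nth false acts i = nth false acts' i /\ nth false ens i = nth false ens' i) ->
  state B Dmax x0 acts ens k = state B Dmax x0 acts' ens' k.
Proof.
elim: k => [//|k IHk] eq_k; rewrite !stateS IHk => [|i lt_ik]; last exact/eq_k/ltnW.
by have [-> ->] := eq_k k (ltnSn k).
Qed.

Lemma state_bounds B Dmax (x : S0 B Dmax) acts ens k :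
  let s := state B Dmax (decode x) acts ens k in (s.1.1 <= B)%N /\ (0 < s.1.2)%N.
Proof.
elim: k => [|k IHk] /=; first by rewrite /state /= -ltnS ltn_ord.
have Dmax_gt0 : (0 < Dmax)%N by apply: leq_ltn_trans (ltn_ord x.1.2).
rewrite stateS; move: IHk; case: (state _ _ _ _ _ k) => [[b D] bt] _ /=.
by split; [exact: geq_minr | case: ifP; rewrite // leq_min Dmax_gt0].
Qed.

Section Averages.
Variable R : realFieldType.

Definition bexp (q : R) (g : bool -> R) : R := q * g true + (1 - q) * g false.

Lemma bexp_cst q c : bexp q (fun=> c) = c.
Proof. by rewrite /bexp; ring. Qed.

Lemma bexp_pred1 q a : bexp q (fun b => (b == a)%:R) = bern q a.
Proof. by case: a; rewrite /bexp /bern /=; ring. Qed.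

Lemma sum_bern_involution (T : finType) (s : T -> T) (c : T -> bool) (q : T -> R)
    (F : bool -> T -> R) :
  involutive s -> (forall x, c (s x) = ~~ c x) -> (forall x, q (s x) = q x) ->
  (forall b x, F b (s x) = F b x) ->
  \sum_x bern (q x) (c x) * F (c x) x = 2^-1 * \sum_x bexp (q x) (F^~ x).
Proof.
move=> sK c_s q_s F_s; set Z := fun x => bern (q x) (c x) * F (c x) x.
have Z_s : \sum_x Z x = \sum_x Z (s x) by apply: reindex_inj; apply: inv_inj.
suff -> : \sum_x bexp (q x) (F^~ x) = \sum_x Z x + \sum_x Z x by lra.
rewrite {2}Z_s -big_split; apply: eq_bigr => x _; rewrite /Z c_s q_s !F_s.
by case: (c x); rewrite /bexp /bern /=; ring.
Qed.

Lemma sum_ord_delta n j (F : nat -> R) :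
  \sum_(k < n) (k == j :> nat)%:R * F k = (j < n)%:R * F j.
Proof.
transitivity (\sum_(k < n | k == j :> nat) F k).
  by rewrite [RHS]big_mkcond; apply: eq_bigr => k _; case: (_ == _); rewrite /= ?mul1r ?mul0r.
by rewrite big_ord1_eq; case: (j < n)%N; rewrite /= ?mul1r ?mul0r.
Qed.

End Averages.

Section OneStep.
Variables (R : realFieldType) (B Dmax : nat) (lam : R).

Definition bern_law (x y : nat) (P : pred nat) : R :=
  bexp lam (fun e => (P (if e then y else x))%:R).

Lemma bern_lawT x y : bern_law x y predT = 1.
Proof. exact: bexp_cst. Qed.

Definition next_match (P : pred nat) (a : bool) (o : obs) (s : sstate) (e : bool) : bool :=
  let s' := step B Dmax s a e in [&& s'.1.2 == o.1.2, s'.2 == o.2 & P s'.1.1].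

Definition next_weight P a o s : R := bexp lam (fun e => (next_match P a o s e)%:R).

Lemma next_weight_idle P o b D bt : (b < B.+1)%N ->
  next_weight P false o (b, D, bt) =
  ((minn D.+1 Dmax == o.1.2) && (bt == o.2))%:R * bern_law b (minn b.+1 B) P.
Proof.
rewrite ltnS => le_bB; rewrite /next_weight /next_match /bern_law /bexp /= !subn0 addn1 addn0.
rewrite (minn_idPl le_bB); case: (_ == o.1.2); case: (_ == o.2) => /=; ring.
Qed.

Lemma next_weight_stale P o b D bt : (1 < o.1.2)%N -> (0 < B)%N ->
  next_weight P true o (b, D, bt) =
  (b == 0%N)%:R * ((minn D.+1 Dmax == o.1.2) && (bt == o.2))%:R * bern_law 0 1 P.
Proof.
move=> lt1D B_gt0; rewrite /next_weight /next_match /bern_law /bexp /=.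
case: b => [|b] /=; last by rewrite eq_sym (gtn_eqF lt1D) /=; ring.
rewrite add0n !subn0 (minn_idPl B_gt0) min0n.
by case: (_ == o.1.2); case: (_ == o.2) => /=; ring.
Qed.

Lemma next_weight_fresh P o b D bt :
    o.1.2 = 1%N -> (0 < D)%N -> (1 < Dmax)%N -> (b < B.+1)%N ->
  next_weight P true o (b, D, bt) = (b == o.2)%:R * (0 < o.2)%:R * bern_law o.2.-1 o.2 P.
Proof.
rewrite ltnS => D1 D_gt0 lt1Dmax le_bB; rewrite /next_weight /next_match /bern_law /bexp /= D1.
case: b le_bB => [|b] le_bB /=.
  have -> : (minn D.+1 Dmax == 1%N) = false by rewrite gtn_eqF // leq_min ltnS D_gt0.
  by case: o.2 => [|j] /=; ring.
rewrite addn0 addn1 !subn1 /= (minn_idPl le_bB) (minn_idPl (ltnW le_bB)).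
by case: eqP => [<- | _] /=; ring.
Qed.

Lemma Lambda_col (i k : 'I_B.+1) :
  Lambda B lam i k = bern_law k (minn k.+1 B) (pred1 (i : nat)).
Proof.
rewrite mxE /bern_law /bexp /=.
have [kB | lt_kB] : (k : nat) = B \/ (k < B)%N.
  by case: (ltngtP k B); [right | rewrite ltnNge -ltnS ltn_ord | left].
- rewrite kB (minn_idPr (leqnSn B)) eqxx.
  have [-> | ne_ik] := eqVneq i k; first by rewrite kB eqxx /=; ring.
  have ne_iB : (i == B :> nat) = false.
    by apply/eqP => iB; move/eqP: ne_ik; apply; apply/val_inj; rewrite /= iB kB.
  by rewrite [B == _]eq_sym ne_iB (ltn_eqF (ltn_ord i)) /=; ring.
- rewrite (minn_idPl lt_kB) (ltn_eqF lt_kB).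
  have [-> | ne_ik] := eqVneq i k; first by rewrite (gtn_eqF (ltnSn k)) eqxx /=; ring.
  have -> : (k == i :> nat) = false by rewrite eq_sym val_eqE (negbTE ne_ik).
  by rewrite eq_sym; case: (_ == _); rewrite /=; ring.
Qed.

Lemma rho_bern_law j :
  rho B lam j = \col_(i < B.+1) bern_law (maxn j 1).-1 (maxn j 1) (pred1 (i : nat)).
Proof.
apply/matrixP => i l; rewrite !mxE /bern_law /bexp /=.
have : (0 < maxn j 1)%N by rewrite leq_max orbT.
case: (maxn j 1) => [// | k] _ /=; rewrite ![(_ == i :> nat)]eq_sym.
have [-> | _] := eqVneq (i : nat) k; first by rewrite (ltn_eqF (ltnSn k)) /=; ring.
by case: (_ == _); rewrite /=; ring.
Qed.

End OneStep.

Section TupleFlip.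
Variable N : nat.

Definition tflip (m : nat) (s : N.-tuple bool) : N.-tuple bool :=
  [tuple tnth s i (+) (val i == m) | i < N].

Lemma tflipK m : involutive (tflip m).
Proof. by move=> s; apply: eq_from_tnth => i; rewrite !tnth_mktuple addbK. Qed.

Lemma nth_tflip m s i : (i < N)%N -> nth false (tflip m s) i = nth false s i (+) (i == m).
Proof. by move=> lt_iN; rewrite -!(tnth_nth false _ (Ordinal lt_iN)) tnth_mktuple. Qed.

Lemma nth_tflip_neq m s i : i != m -> nth false (tflip m s) i = nth false s i.
Proof.
move=> /negbTE ne_im; have [lt_iN | le_Ni] := ltnP i N.
  by rewrite nth_tflip // ne_im addbF.
by rewrite !nth_default ?size_tuple.
Qed.

Lemma nth_tflip_eq m s : (m < N)%N -> nth false (tflip m s) m = ~~ nth false s m.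
Proof. by move=> lt_mN; rewrite nth_tflip // eqxx addbT. Qed.

End TupleFlip.

Section SampleSpace.
Variables (R : realFieldType) (B Dmax : nat) (lam p : R) (pi : S0 B Dmax -> R)
  (mu : seq obs -> seq bool -> R) (N : nat).
Local Notation Om := (Omega B Dmax N).

Definition flipE m (w : Om) : Om := (w.1.1.1, tflip m w.1.1.2, w.1.2, w.2).
Definition flipR m (w : Om) : Om := (w.1.1, tflip m w.1.2, w.2).
Definition flipA m (w : Om) : Om := (w.1, tflip m w.2).

Lemma flipEK m : involutive (flipE m).
Proof. by case=> [[[x e] r] a]; rewrite /flipE /= tflipK. Qed.
Lemma flipRK m : involutive (flipR m).
Proof. by case=> [[[x e] r] a]; rewrite /flipR /= tflipK. Qed.
Lemma flipAK m : involutive (flipA m).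
Proof. by case=> [[[x e] r] a]; rewrite /flipA /= tflipK. Qed.

Definition agree k (w w' : Om) :=
  om_x w = om_x w' /\ forall i, (i < k)%N ->
   [/\ nth false (om_e w) i = nth false (om_e w') i,
       nth false (om_r w) i = nth false (om_r w') i &
       nth false (om_a w) i = nth false (om_a w') i].

Lemma agree_le j k w w' : (j <= k)%N -> agree k w w' -> agree j w w'.
Proof. by move=> le_jk [eq_x eq_k]; split=> // i lt_ij; apply/eq_k/(leq_trans lt_ij). Qed.

Lemma agree_flipE m w : agree m w (flipE m w).
Proof. by split=> // i lt_im; rewrite /om_e /= nth_tflip_neq // ltn_eqF. Qed.
Lemma agree_flipR m w : agree m w (flipR m w).
Proof. by split=> // i lt_im; rewrite /om_r /= nth_tflip_neq // ltn_eqF. Qed.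
Lemma agree_flipA m w : agree m w (flipA m w).
Proof. by split=> // i lt_im; rewrite /om_a /= nth_tflip_neq // ltn_eqF. Qed.

Lemma agree_state j k w w' : (j <= k)%N -> agree k w w' -> om_state w j = om_state w' j.
Proof.
move=> le_jk [eq_x eq_k]; rewrite /om_state eq_x; apply: eq_state => i lt_ij.
by have [? ? ?] := eq_k i (leq_trans lt_ij le_jk).
Qed.

Lemma agree_take j k w w' :
  (j <= k)%N -> agree k w w' -> take j (om_a w) = take j (om_a w').
Proof.
move=> le_jk [_ eq_k]; apply: (@eq_from_nth _ false).
  by rewrite !size_take /om_a !size_tuple.
move=> i; rewrite size_take => lt_i.
have lt_ij : (i < j)%N by apply: leq_trans lt_i (geq_minl _ _).
by rewrite !nth_take //; have [_ _ ->] := eq_k i (leq_trans lt_ij le_jk).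
Qed.

Lemma om_stateS (w : Om) k :
  om_state w k.+1 = step B Dmax (om_state w k) (nth false (om_a w) k) (nth false (om_e w) k).
Proof. exact: stateS. Qed.

Lemma obs_histS (w : Om) k : obs_hist w k.+1 = rcons (obs_hist w k) (om_obs w k).
Proof. by rewrite /obs_hist -addn1 iotaD map_cat cats1. Qed.

Lemma eq_obs_hist k (w w' : Om) :
  (forall j, (j < k)%N -> om_obs w j = om_obs w' j) -> obs_hist w k = obs_hist w' k.
Proof. by move=> eq_k; apply/eq_in_map => j; rewrite mem_iota add0n => /eq_k. Qed.

Lemma agree_obs_hist k w w' : agree k w w' -> obs_hist w k = obs_hist w' k.
Proof.
move=> agr; apply: eq_obs_hist => j lt_jk; rewrite /om_obs (agree_state (ltnW lt_jk) agr).
by case: agr => _ /(_ j lt_jk) [_ -> _].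
Qed.

Lemma agree_obs_histS k w w' :
  agree k w w' -> om_r w = om_r w' -> obs_hist w k.+1 = obs_hist w' k.+1.
Proof.
move=> agr eq_r; apply: eq_obs_hist => j; rewrite ltnS leq_eqVlt => /predU1P [-> | lt_jk].
  by rewrite /om_obs (agree_state (leqnn k) agr) eq_r.
by rewrite /om_obs (agree_state (ltnW lt_jk) agr); case: agr => _ /(_ j lt_jk) [_ -> _].
Qed.

Definition act_prob m (w : Om) : R := mu (obs_hist w m.+1) (take m (om_a w)).

Definition slot_weight m (w : Om) : R :=
  bern lam (nth false (om_e w) m) * bern p (nth false (om_r w) m) *
  bern (act_prob m w) (nth false (om_a w) m).

Definition prefix_weight k (w : Om) : R := pi (om_x w) * \prod_(i < k) slot_weight i w.

Lemma prefix_weightS k w : prefix_weight k.+1 w = prefix_weight k w * slot_weight k w.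
Proof. by rewrite /prefix_weight big_ord_recr /= mulrA. Qed.

Lemma act_prob_agree m w w' :
  agree m w w' -> om_r w = om_r w' -> act_prob m w = act_prob m w'.
Proof.
by move=> agr eq_r; rewrite /act_prob (agree_obs_histS agr eq_r) (agree_take (leqnn m) agr).
Qed.

Lemma agree_prefix_weight k w w' : agree k w w' -> prefix_weight k w = prefix_weight k w'.
Proof.
move=> agr; rewrite /prefix_weight; case: (agr) => -> eq_k; congr (_ * _).
apply: eq_bigr => i _; have [eq_e eq_r eq_a] := eq_k i (ltn_ord i).
rewrite /slot_weight /act_prob eq_e eq_r eq_a (agree_take (ltnW (ltn_ord i)) agr).
by rewrite (agree_obs_hist (agree_le (ltn_ord i) agr)).
Qed.

Definition local m (f : Om -> R) := forall w w', agree m w w' -> f w = f w'.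

(* The right-hand sum still ranges over the bits a_m and e_m, on which its
   summand no longer depends: hence the factor 1/4. *)
Lemma sum_slot m (h : bool -> bool -> Om -> R) : (m < N)%N ->
    (forall a e w, h a e (flipA m w) = h a e w) ->
    (forall a e w, h a e (flipE m w) = h a e w) ->
  \sum_w h (nth false (om_a w) m) (nth false (om_e w) m) w * prefix_weight m.+1 w =
  4^-1 * \sum_w bexp lam (fun e => bexp (act_prob m w) (fun a => h a e w)) *
                bern p (nth false (om_r w) m) * prefix_weight m w.
Proof.
move=> lt_mN h_A h_E.
pose rest w := bern p (nth false (om_r w) m) * prefix_weight m w.
pose F_A a w := h a (nth false (om_e w) m) w * bern lam (nth false (om_e w) m) * rest w.
pose F_E e w := bexp (act_prob m w) (fun a => h a e w) * rest w.
have rest_A w : rest (flipA m w) = rest w.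
  by rewrite /rest -(agree_prefix_weight (agree_flipA m w)).
have rest_E w : rest (flipE m w) = rest w.
  by rewrite /rest -(agree_prefix_weight (agree_flipE m w)).
transitivity (\sum_w bern (act_prob m w) (nth false (om_a w) m) * F_A (nth false (om_a w) m) w).
  by apply: eq_bigr => w _; rewrite prefix_weightS /slot_weight /F_A /rest; ring.
rewrite (sum_bern_involution (F := F_A) (flipAK m)); last 3 first.
- by move=> w; rewrite /om_a nth_tflip_eq.
- by move=> w; rewrite (act_prob_agree (agree_flipA m w)).
- by move=> a w; rewrite /F_A h_A rest_A.
transitivity (2^-1 * \sum_w bern lam (nth false (om_e w) m) * F_E (nth false (om_e w) m) w).
  by congr (_ * _); apply: eq_bigr => w _; rewrite /F_A /F_E /bexp; ring.
rewrite (sum_bern_involution (F := F_E) (q := fun=> lam) (flipEK m)) //; last 2 first.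
- by move=> w; rewrite /om_e nth_tflip_eq.
- by move=> e w; rewrite /F_E /bexp !h_E rest_E (act_prob_agree (agree_flipE m w)).
rewrite mulrA -invfM -natrM; congr (_ * _); apply: eq_bigr => w _.
by rewrite /F_E /rest /bexp; ring.
Qed.

Lemma sum_prefix_weightS m (f : Om -> R) (g : bool -> R) : (m < N)%N -> local m f ->
  \sum_w f w * g (nth false (om_r w) m) * prefix_weight m.+1 w =
  8^-1 * bexp p g * \sum_w f w * prefix_weight m w.
Proof.
move=> lt_mN f_loc; pose F b w := g b * (f w * prefix_weight m w).
have fg_A w : f (flipA m w) = f w by rewrite -(f_loc _ _ (agree_flipA m w)).
have fg_E w : f (flipE m w) = f w by rewrite -(f_loc _ _ (agree_flipE m w)).
rewrite (sum_slot (h := fun _ _ w => f w * g (nth false (om_r w) m))) //; last 2 first.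
- by move=> a e w; rewrite fg_A.
- by move=> a e w; rewrite fg_E.
transitivity (4^-1 * \sum_w bern p (nth false (om_r w) m) * F (nth false (om_r w) m) w).
  by congr (_ * _); apply: eq_bigr => w _; rewrite !bexp_cst /F; ring.
rewrite (sum_bern_involution (F := F) (q := fun=> p) (flipRK m)) //; last 2 first.
- by move=> w; rewrite /om_r nth_tflip_eq.
- move=> b w; rewrite /F (f_loc _ _ (agree_flipR m w)).
  by rewrite (agree_prefix_weight (agree_flipR m w)).
have -> : \sum_w bexp p (F^~ w) = bexp p g * \sum_w f w * prefix_weight m w.
  by rewrite mulr_sumr; apply: eq_bigr => w _; rewrite /F /bexp; ring.
by rewrite mulrA -invfM -natrM mulrA.
Qed.

Lemma sum_weight_local m (f : Om -> R) : (m <= N)%N -> local m f ->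
  \sum_w f w * weight lam p pi mu w = 8^-1 ^+ (N - m) * \sum_w f w * prefix_weight m w.
Proof.
move=> le_mN; have [k Nk] : exists k, N = (m + k)%N by exists (N - m)%N; rewrite subnKC.
have -> : (N - m)%N = k by rewrite Nk addKn.
elim: k m le_mN Nk => [|k IHk] m le_mN Nk f_loc.
  by rewrite addn0 in Nk; rewrite -Nk expr0 mul1r.
have lt_mN : (m < N)%N by rewrite Nk -addSnnS leq_addr.
rewrite (IHk m.+1) //; last 2 first.
- by rewrite addSnnS.
- by move=> w w' /(agree_le (leqnSn m)) /f_loc.
have := @sum_prefix_weightS m f (fun=> 1) lt_mN f_loc.
under eq_bigr do rewrite mulr1.
by rewrite bexp_cst mulr1 exprS => ->; ring.
Qed.

Lemma belief_scaled t hobs ha (K : R) (nu : pred nat -> R) :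
    (forall P, joint lam p pi mu N t hobs ha P = K * nu P) -> nu predT = 1 ->
    joint lam p pi mu N t hobs ha predT != 0 ->
  belief lam p pi mu N t hobs ha = \col_(i < B.+1) nu (pred1 (i : nat)).
Proof.
move=> jointE nuT; rewrite jointE nuT mulr1 => K_neq0.
by apply/matrixP => i l; rewrite !mxE !jointE nuT mulr1 mulrAC divff // mul1r.
Qed.

Section History.
Variables (hobs : seq obs) (ha : seq bool) (u : nat).
Hypotheses (lt_uN : (u.+1 < N)%N) (size_hobs : size hobs = u.+2) (size_ha : size ha = u.+1).

(* [Omega] indexes slots from 0, so slot t of the paper has index [u] = t - 1:
   [o_prev] is o(t), [o_next] is o(t+1) and [a_last] is a(t). *)

Local Notation o_prev := (nth (false, 0%N, 0%N) hobs u).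
Local Notation o_next := (nth (false, 0%N, 0%N) hobs u.+1).
Local Notation a_last := (nth false ha u).
Local Notation q_last := (mu (take u.+1 hobs) (take u ha)).
Local Notation prior := (joint lam p pi mu N u.+1 (take u.+1 hobs) (take u ha)).
Local Notation level w := (om_state w u).1.1.

Definition consistent (w : Om) : bool :=
  (obs_hist w u.+1 == take u.+1 hobs) && (take u (om_a w) == take u ha).

Lemma consistent_agree w w' :
  agree u w w' -> om_r w = om_r w' -> consistent w = consistent w'.
Proof.
by move=> agr eq_r; rewrite /consistent (agree_obs_histS agr eq_r) (agree_take (leqnn u) agr).
Qed.

Lemma consistent_agreeS w w' : agree u.+1 w w' -> consistent w = consistent w'.
Proof. by move=> agr; rewrite /consistent (agree_obs_hist agr) (agree_take (leqnSn u) agr). Qed.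

Lemma consistent_act_prob w : consistent w -> act_prob u w = q_last.
Proof. by case/andP => /eqP hist /eqP acts; rewrite /act_prob hist acts. Qed.

Lemma consistent_state w : consistent w -> om_state w u = (level w, o_prev.1.2, o_prev.2).
Proof.
case/andP => /eqP hist _; have := congr1 (fun s => nth (false, 0%N, 0%N) s u) hist.
rewrite nth_take // /obs_hist (nth_map 0%N) ?size_iota // nth_iota // /om_obs /= => <-.
by case: (om_state w u) => [[]].
Qed.

Lemma sum_consistent (F : bool -> bool -> sstate -> R) :
  \sum_w (consistent w)%:R *
         F (nth false (om_a w) u) (nth false (om_e w) u) (om_state w u) * prefix_weight u.+1 w =
  4^-1 * \sum_w (consistent w)%:R *
         bexp lam (fun e => bexp q_last (fun a => F a e (om_state w u))) *
         bern p (nth false (om_r w) u) * prefix_weight u w.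
Proof.
pose h a e w := (consistent w)%:R * F a e (om_state w u).
rewrite (sum_slot (h := h)); last 3 first.
- exact: ltnW.
- move=> a e w; rewrite /h -(agree_state (leqnn u) (agree_flipA u w)).
  by rewrite -(consistent_agree (agree_flipA u w)).
- move=> a e w; rewrite /h -(agree_state (leqnn u) (agree_flipE u w)).
  by rewrite -(consistent_agree (agree_flipE u w)).
congr (_ * _); apply: eq_bigr => w _; rewrite /h.
case cw: (consistent w); last by rewrite /bexp /=; ring.
by rewrite (consistent_act_prob cw) /bexp /=; ring.
Qed.

Lemma joint_next_sum P : joint lam p pi mu N u.+2 hobs ha P =
  \sum_w (consistent w)%:R *
    ((nth false (om_a w) u == a_last)%:R *
     (next_match B Dmax P a_last o_next (om_state w u) (nth false (om_e w) u))%:R) *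
    (nth false (om_r w) u.+1 == o_next.1.1)%:R * weight lam p pi mu w.
Proof.
have hobsE : hobs = rcons (take u.+1 hobs) o_next.
  by rewrite -take_nth ?size_hobs // -size_hobs take_size.
have haE : ha = rcons (take u ha) a_last by rewrite -take_nth ?size_ha // -size_ha take_size.
rewrite /joint; apply: eq_bigr => w _ /=.
have actsE : take u.+1 (om_a w) = rcons (take u (om_a w)) (nth false (om_a w) u).
  by rewrite -take_nth // /om_a size_tuple ltnW.
rewrite {1}hobsE {1}haE actsE obs_histS !eqseq_rcons /om_obs om_stateS /consistent /next_match.
move: (nth _ hobs u.+1) => [[r0 D0] bt0] /=.
rewrite !xpair_eqE -mulrb -mulr_natl.
case: (nth false (om_a w) u =P a_last) => [-> | _]; last by rewrite !andbF /=; ring.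
by rewrite -!mulnb !natrM; ring.
Qed.

Lemma joint_next P : joint lam p pi mu N u.+2 hobs ha P =
  bern q_last a_last * bern p o_next.1.1 *
  \sum_w (consistent w)%:R * next_weight B Dmax lam P a_last o_next (om_state w u) *
         weight lam p pi mu w.
Proof.
pose F (a e : bool) (s : sstate) : R :=
  (a == a_last)%:R * (next_match B Dmax P a_last o_next s e)%:R.
pose f w :=
  (consistent w)%:R * F (nth false (om_a w) u) (nth false (om_e w) u) (om_state w u).
have f_loc : local u.+1 f.
  move=> w w' agr; rewrite /f (consistent_agreeS agr) (agree_state (leqnSn u) agr).
  by case: agr => _ /(_ u (ltnSn u)) [-> _ ->].
have F_avg s : bexp lam (fun e => bexp q_last (fun a => F a e s)) =
               bern q_last a_last * next_weight B Dmax lam P a_last o_next s.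
  by rewrite /F /next_weight /bexp /bern; case: a_last => /=; ring.
have marginal :
    \sum_w (consistent w)%:R * next_weight B Dmax lam P a_last o_next (om_state w u) *
           weight lam p pi mu w =
    8^-1 ^+ (N - u.+1) * (4^-1 * \sum_w (consistent w)%:R *
      (next_weight B Dmax lam P a_last o_next (om_state w u) *
       (bern p (nth false (om_r w) u) * prefix_weight u w))).
  rewrite (sum_weight_local (ltnW lt_uN)) => [|w w' agr]; last first.
    by rewrite (consistent_agreeS agr) (agree_state (leqnSn u) agr).
  rewrite (sum_consistent (fun _ _ s => next_weight B Dmax lam P a_last o_next s)).
  by under eq_bigr do rewrite !bexp_cst -!mulrA.
rewrite marginal joint_next_sum (sum_weight_local (m := u.+2)) // => [|w w' agr]; last first.
  congr (_ * _); first exact: f_loc (agree_le (leqnSn _) agr).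
  by case: agr => _ /(_ u.+1 (ltnSn _)) [_ -> _].
rewrite (@sum_prefix_weightS u.+1 _ (fun r => (r == o_next.1.1)%:R) lt_uN f_loc).
rewrite bexp_pred1 sum_consistent.
under eq_bigr do rewrite F_avg -!mulrA mulrCA.
by rewrite -mulr_sumr -(subnSK lt_uN) exprS; ring.
Qed.

Lemma prior_sum P :
  prior P = \sum_w (consistent w)%:R * (P (level w))%:R * weight lam p pi mu w.
Proof.
apply: eq_bigr => w _; rewrite /consistent /=.
by case: (_ == _); case: (_ == _); case: (P _); rewrite /= ?mul1r ?mul0r.
Qed.

Lemma sum_consistent_level (phi : nat -> R) :
  \sum_w (consistent w)%:R * phi (level w) * weight lam p pi mu w =
  \sum_(k < B.+1) phi k * prior (pred1 (k : nat)).
Proof.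
under [RHS]eq_bigr do rewrite prior_sum mulr_sumr.
rewrite exchange_big /=; apply: eq_bigr => w _.
have lt_level : (level w < B.+1)%N.
  by rewrite ltnS; case: (state_bounds (om_x w) (om_a w) (om_e w) u).
rewrite (bigD1 (Ordinal lt_level)) //= eqxx big1 ?addr0 => [|k ne_k].
  by rewrite mulr1; ring.
suff -> : (level w == k) = false by rewrite mulr0 mul0r mulr0.
by apply: contraNF ne_k => /eqP lvl; apply/eqP/val_inj.
Qed.

Lemma joint_next_level P : joint lam p pi mu N u.+2 hobs ha P =
  bern q_last a_last * bern p o_next.1.1 *
  \sum_(k < B.+1) next_weight B Dmax lam P a_last o_next (k : nat, o_prev.1.2, o_prev.2) *
                  prior (pred1 (k : nat)).
Proof.
rewrite joint_next -(sum_consistent_level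
  (fun k => next_weight B Dmax lam P a_last o_next (k, o_prev.1.2, o_prev.2))).
congr (_ * _); apply: eq_bigr => w _.
by case cw: (consistent w); rewrite /= ?mul0r // {1}(consistent_state cw).
Qed.

Lemma prior_total : prior predT = \sum_(k < B.+1) prior (pred1 (k : nat)).
Proof.
transitivity (\sum_(k < B.+1) 1 * prior (pred1 (k : nat))).
  by rewrite -(sum_consistent_level (fun=> 1)) prior_sum.
by under eq_bigr do rewrite mul1r.
Qed.

Lemma prev_age_gt0 : joint lam p pi mu N u.+2 hobs ha predT != 0 -> (0 < o_prev.1.2)%N.
Proof.
apply: contraNT; rewrite -eqn0Ngt => /eqP age0; rewrite joint_next big1 ?mulr0 // => w _.
case cw: (consistent w); last by rewrite !mul0r.
have : (0 < (om_state w u).1.2)%N := (state_bounds (om_x w) (om_a w) (om_e w) u).2.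
by rewrite (consistent_state cw) age0.
Qed.

Lemma belief_idle : a_last = false -> joint lam p pi mu N u.+2 hobs ha predT != 0 ->
  belief lam p pi mu N u.+2 hobs ha =
  Lambda B lam *m belief lam p pi mu N u.+1 (take u.+1 hobs) (take u ha).
Proof.
move=> a0 nz.
pose c := bern q_last a_last * bern p o_next.1.1 *
          ((minn o_prev.1.2.+1 Dmax == o_next.1.2) && (o_prev.2 == o_next.2))%:R.
have nextE P : joint lam p pi mu N u.+2 hobs ha P =
               c * \sum_(k < B.+1) bern_law lam k (minn k.+1 B) P * prior (pred1 (k : nat)).
  rewrite joint_next_level /c -!mulrA; do 2!congr (_ * _).
  rewrite mulr_sumr; apply: eq_bigr => k _.
  by rewrite a0 next_weight_idle // mulrA.
have nextT : joint lam p pi mu N u.+2 hobs ha predT = c * prior predT.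
  by rewrite nextE prior_total; under eq_bigr do rewrite bern_lawT mul1r.
have c_neq0 : c != 0 by move: nz; rewrite nextT mulf_eq0 negb_or => /andP [].
apply/matrixP => i l; rewrite !mxE nextE nextT -mulf_div divff // mul1r mulr_suml.
by apply: eq_bigr => k _; rewrite Lambda_col !mxE mulrA.
Qed.

Lemma belief_stale : a_last = true -> (1 < o_next.1.2)%N -> (0 < B)%N ->
    joint lam p pi mu N u.+2 hobs ha predT != 0 ->
  belief lam p pi mu N u.+2 hobs ha = rho B lam 0.
Proof.
move=> a1 age_gt1 B_gt0 nz.
pose K := bern q_last a_last * bern p o_next.1.1 *
          ((minn o_prev.1.2.+1 Dmax == o_next.1.2) && (o_prev.2 == o_next.2))%:R *
          prior (pred1 0%N).
have nextE P : joint lam p pi mu N u.+2 hobs ha P = K * bern_law lam 0 1 P.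
  rewrite joint_next_level.
  under eq_bigr do rewrite a1 next_weight_stale // -!mulrA.
  by rewrite (sum_ord_delta _ _ (fun k => _ * (_ * prior (pred1 k)))) /K /=; ring.
by rewrite rho_bern_law; apply: belief_scaled nextE (bern_lawT _ _ _) nz.
Qed.

Lemma belief_fresh : a_last = true -> o_next.1.2 = 1%N -> (1 < Dmax)%N ->
    joint lam p pi mu N u.+2 hobs ha predT != 0 ->
  (0 < o_next.2 <= B)%N /\ belief lam p pi mu N u.+2 hobs ha = rho B lam o_next.2.
Proof.
move=> a1 age1 Dmax_gt1 nz; have age_gt0 := prev_age_gt0 nz.
pose K := bern q_last a_last * bern p o_next.1.1 *
          (o_next.2 < B.+1)%:R * (0 < o_next.2)%:R * prior (pred1 o_next.2).
have nextE P : joint lam p pi mu N u.+2 hobs ha P = K * bern_law lam o_next.2.-1 o_next.2 P.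
  rewrite joint_next_level.
  under eq_bigr do rewrite a1 next_weight_fresh // -!mulrA.
  by rewrite (sum_ord_delta _ _ (fun k => _ * (_ * prior (pred1 k)))) /K; ring.
have level_ok : (0 < o_next.2 <= B)%N.
  have : K != 0 by move: nz; rewrite nextE bern_lawT mulr1.
  by rewrite /K ltnS; case: (0 < _)%N; case: (_ <= B)%N; rewrite ?mulr0 ?mul0r ?eqxx.
split=> //; case/andP: level_ok => level_gt0 _.
rewrite rho_bern_law (maxn_idPl level_gt0).
exact: belief_scaled nextE (bern_lawT _ _ _) nz.
Qed.

End History.

End SampleSpace.

Theorem theorem1 (R : realFieldType) (B Dmax : nat) (lam p : R)
  (pi : S0 B Dmax -> R) (mu : seq obs -> seq bool -> R)
  (hB : (1 <= B)%N) (hD : (2 <= Dmax)%N)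
  (hlam : 0 <= lam <= 1) (hp : 0 <= p <= 1)
  (hpi0 : forall x, 0 <= pi x) (hpi1 : \sum_x pi x = 1)
  (hmu : forall ho ha, 0 <= mu ho ha <= 1)
  (N t : nat) (ht : (1 <= t)%N) (htN : (t.+1 <= N)%N)
  (hobs : seq obs) (ha : seq bool)
  (hsz1 : size hobs = t.+1) (hsz2 : size ha = t)
  (hpos : 0 < joint lam p pi mu N t.+1 hobs ha predT) :
  let beta := belief lam p pi mu N t (take t hobs) (take t.-1 ha) in
  let beta' := belief lam p pi mu N t.+1 hobs ha in
  let a := nth false ha t.-1 in
  let o := nth (false, 0%N, 0%N) hobs t in
  [/\ (a = false -> beta' = Lambda B lam *m beta),
      (a = true -> (1 < o.1.2)%N -> beta' = rho B lam 0) &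
      (a = true -> o.1.2 = 1%N -> (1 <= o.2 <= B)%N /\ beta' = rho B lam o.2)].
Proof.
case: t ht htN hsz1 hsz2 hpos => [// | u] _ lt_uN size_hobs size_ha /lt0r_neq0 nz /=.
split=> [a0 | a1 age_gt1 | a1 age1].
- exact: belief_idle.
- exact: belief_stale.
- exact: belief_fresh.
Qed.
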